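(* For every $Y\in\mathcal A_X$ and every $\mathbf U\in\mathcal E([0,T];\mathcal A_X^{\otimes 2})$, $$\varphi\big(Y\,\delta^X(\mathbf U)^*\big)=(\varphi\times\varphi)\big(\langle D^XY;\mathbf U^*\rangle_{\mathcal H}\big).$$
   Context: NC probability space: a pair $(\mathcal A,\varphi)$ with $\mathcal A$ a unital complex Banach $*$-algebra with $\|XY\|\le\|X\|\|Y\|$, $\|X^*X\|=\|X\|^2$, and $\varphi$ a linear functional with $\varphi(1)=1$, $\varphi(XY)=\varphi(YX)$, $\varphi(X^*X)\ge0$, $\varphi(X^*X)=0\Rightarrow X=0$. For $k\ge2$, $\mathcal A^{\otimes k}$ is the algebraic tensor product with componentwise product $(F_1\otimes\cdots\otimes F_k)\cdot(G_1\otimes\cdots\otimes G_k)=(F_1G_1)\otimes\cdots\otimes(F_kG_k)$, involution $(F_1\otimes\cdots\otimes F_k)^*=F_1^*\otimes\cdots\otimes F_k^*$, and $\varphi^{\times k}(F_1\otimes\cdots\otimes F_k)=\varphi(F_1)\cdots\varphi(F_k)$ (written $\varphi\times\varphi$, $\varphi\times\varphi\times\varphi$), all extended linearly. Also $(F_1\otimes F_2)\sharp G:=F_1GF_2$ and $(\mathrm{Id}\times\varphi\times\mathrm{Id})(F_1\otimes F_2\otimes F_3):=\varphi(F_2)F_1F_3$, extended linearly. A centered semicircular process $\{X_t\}_{t\in[0,T]}$ is a family of self-adjoint elements whose mixed moments satisfy the free Wick formula $\varphi(X_{t_1}\cdots X_{t_r})=\sum_{\pi\in NC_2(r)}\prod_{\{p,q\}\in\pi}\varphi(X_{t_p}X_{t_q})$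 for even $r$ ($NC_2(r)$ = non-crossing pairings of $\{1,\dots,r\}$) and vanishing odd moments. Fix $T>0$ and a centered semicircular process $\{X_t\}_{t\in[0,T]}$ in $(\mathcal A,\varphi)$; $\mathcal A_X$ is the unital subalgebra generated by $\{X_t\}$. $\mathcal E([0,T];\mathbb R)$ is the space of step functions $h=\sum_i\alpha_i\mathbf 1_{[a_i,b_i)}$ ($\alpha_i\in\mathbb R$, $0\le a_i<b_i\le T$), and $X(h):=\sum_i\alpha_i(X_{b_i}-X_{a_i})$. $\mathcal H$ is the completion of $\mathcal E([0,T];\mathbb R)$ for the inner product determined by $\langle\mathbf 1_{[0,s]},\mathbf 1_{[0,t]}\rangle_{\mathcal H}=\varphi(X_sX_t)$. For an algebra $E$, $\mathcal E([0,T];E)$ is the set of finite sums $t\mapsto\sum_i x_ih_i(t)$ with $x_i\in E$, $h_i\in\mathcal E([0,T];\mathbb R)$. Pairings: $\langle xh,k\rangle_{\mathcal H}=\langle h,xk\rangle_{\mathcal H}:=x\langle h,k\rangle_{\mathcal H}$ and $\langle xh;yk\rangle_{\mathcal H}:=(x\cdot y)\langle h,k\rangle_{\mathcal H}$, extended bilinearly; for $\mathbf U=\sum_ix_ih_i$, $\mathbf U^*:=\sum_ix_i^*h_i$. The derivative $D^X:\mathcal A_X\to\mathcal E([0,T];\mathcal A_X^{\otimes2})$ is the linear map with $D^X1=0$ and $D^X\big(X(h_1)\cdots X(h_m)\big)=\sum_{i=1}^m\big[(X(h_1)\cdots X(h_{i-1}))\otimes(X(h_{i+1})\cdots X(h_m))\big]h_i$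 (empty products $=1$). For $F_1,F_2\in\mathcal A_X$, $D^X_1(F_1\otimes F_2):=D^XF_1\otimes F_2$, $D^X_2(F_1\otimes F_2):=F_1\otimes D^XF_2$ (in $\mathcal E([0,T];\mathcal A_X^{\otimes3})$), extended linearly, and $D^X:=D^X_1+D^X_2$ on $\mathcal A_X^{\otimes2}$. The divergence is defined for $\mathbf F\in\mathcal A_X^{\otimes2}$, $h\in\mathcal E([0,T];\mathbb R)$ by $\delta^X(\mathbf Fh):=\mathbf F\sharp X(h)-(\mathrm{Id}\times\varphi\times\mathrm{Id})\big(\langle D^X\mathbf F,h\rangle_{\mathcal H}\big)$ and extended linearly to $\mathcal E([0,T];\mathcal A_X^{\otimes2})$. *)

From Stdlib Require Import Reals List Arith.
Import ListNotations.
Open Scope R_scope.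

Record C : Type := mkC { Re : R; Im : R }.
Definition C0 : C := mkC 0 0.
Definition C1 : C := mkC 1 0.
Definition RtoC (r : R) : C := mkC r 0.
Definition Cadd (z w : C) : C := mkC (Re z + Re w) (Im z + Im w).
Definition Copp (z : C) : C := mkC (- Re z) (- Im z).
Definition Csub (z w : C) : C := Cadd z (Copp w).
Definition Cmul (z w : C) : C :=
  mkC (Re z * Re w - Im z * Im w) (Re z * Im w + Im z * Re w).
Definition Cconj (z : C) : C := mkC (Re z) (- Im z).
Definition Cmod (z : C) : R := sqrt (Re z ^ 2 + Im z ^ 2).
Definition Csum (l : list C) : C := fold_right Cadd C0 l.
Definition Cprod (l : list C) : C := fold_right Cmul C1 l.

Record NCProbSpace : Type := {
  carrier :> Type;
  zero : carrier;
  one : carrier;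
  add : carrier -> carrier -> carrier;
  opp : carrier -> carrier;
  scal : C -> carrier -> carrier;
  mul : carrier -> carrier -> carrier;
  star : carrier -> carrier;
  norm : carrier -> R;
  phi : carrier -> C;
  add_assoc : forall x y z, add x (add y z) = add (add x y) z;
  add_comm : forall x y, add x y = add y x;
  add_zero : forall x, add x zero = x;
  add_opp : forall x, add x (opp x) = zero;
  scal_assoc : forall a b x, scal a (scal b x) = scal (Cmul a b) x;
  scal_one : forall x, scal C1 x = x;
  scal_add_l : forall a b x, scal (Cadd a b) x = add (scal a x) (scal b x);
  scal_add_r : forall a x y, scal a (add x y) = add (scal a x) (scal a y);
  mul_assoc : forall x y z, mul x (mul y z) = mul (mul x y) z;
  mul_one_l : forall x, mul one x = x;
  mul_one_r : forall x, mul x one = x;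
  mul_add_l : forall x y z, mul (add x y) z = add (mul x z) (mul y z);
  mul_add_r : forall x y z, mul x (add y z) = add (mul x y) (mul x z);
  mul_scal_l : forall a x y, mul (scal a x) y = scal a (mul x y);
  mul_scal_r : forall a x y, mul x (scal a y) = scal a (mul x y);
  star_add : forall x y, star (add x y) = add (star x) (star y);
  star_scal : forall a x, star (scal a x) = scal (Cconj a) (star x);
  star_mul : forall x y, star (mul x y) = mul (star y) (star x);
  star_star : forall x, star (star x) = x;
  norm_nonneg : forall x, 0 <= norm x;
  norm_zero : forall x, norm x = 0 <-> x = zero;
  norm_triangle : forall x y, norm (add x y) <= norm x + norm y;
  norm_scal : forall a x, norm (scal a x) = Cmod a * norm x;
  norm_mul : forall x y, norm (mul x y) <= norm x * norm y;
  norm_cstar : forall x, norm (mul (star x) x) = norm x ^ 2;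
  complete : forall u : nat -> carrier,
    (forall eps, 0 < eps -> exists N, forall m n, (N <= m)%nat -> (N <= n)%nat ->
        norm (add (u m) (opp (u n))) < eps) ->
    exists l, forall eps, 0 < eps -> exists N, forall n, (N <= n)%nat ->
        norm (add (u n) (opp l)) < eps;
  phi_add : forall x y, phi (add x y) = Cadd (phi x) (phi y);
  phi_scal : forall a x, phi (scal a x) = Cmul a (phi x);
  phi_one : phi one = C1;
  phi_trace : forall x y, phi (mul x y) = phi (mul y x);
  phi_pos : forall x, 0 <= Re (phi (mul (star x) x)) /\ Im (phi (mul (star x) x)) = 0;
  phi_faithful : forall x, phi (mul (star x) x) = C0 -> x = zero
}.

(* All pairings of the list l (pairs (x,y) with x before y in l); n is fuel. *)
Fixpoint pairings (n : nat) (l : list nat) : list (list (nat * nat)) :=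
  match l with
  | [] => [[]]
  | x :: rest =>
      match n with
      | O => []
      | Datatypes.S n' =>
          flat_map (fun y => map (cons (x, y)) (pairings n' (remove Nat.eq_dec y rest))) rest
      end
  end.

Definition crossing (p q : nat * nat) : bool :=
  (fst p <? fst q)%nat && (fst q <? snd p)%nat && (snd p <? snd q)%nat.
Definition noncrossingb (pi : list (nat * nat)) : bool :=
  forallb (fun p => forallb (fun q => negb (crossing p q)) pi) pi.
Definition NC2 (r : nat) : list (list (nat * nat)) :=
  filter noncrossingb (pairings r (seq 1 r)).

(* (alpha, a, b) stands for alpha * 1_[a,b) ; a step function is a finite sum. *)
Definition step := list (R * R * R).
Definition valid_step (T : R) (h : step) : Prop :=
  Forall (fun x => let '(_, a, b) := x in (0 <= a < b /\ b <= T)) h.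

Section Constructions.
Variable NS : NCProbSpace.

Definition Asum (l : list NS) : NS := fold_right (add NS) (zero NS) l.
Definition Aprod (l : list NS) : NS := fold_right (mul NS) (one NS) l.
Definition Asub (x y : NS) : NS := add NS x (opp NS y).

(* algebraic tensor products, represented by formal sums of pure tensors;
   all maps below are the (multi)linear extensions from pure tensors *)
Definition T2 := list (NS * NS).
Definition T3 := list (NS * NS * NS).
Definition T2scal (c : C) (t : T2) : T2 := map (fun x => let '(a, b) := x in (scal NS c a, b)) t.
Definition T3scal (c : C) (t : T3) : T3 :=
  map (fun x => let '(a, b, d) := x in (scal NS c a, b, d)) t.
Definition T2mul (t u : T2) : T2 :=
  flat_map (fun x => let '(a, b) := x in
    map (fun y => let '(c, d) := y in (mul NS a c, mul NS b d)) u) t.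
Definition T2star (t : T2) : T2 := map (fun x => let '(a, b) := x in (star NS a, star NS b)) t.
Definition phiphi (t : T2) : C :=
  Csum (map (fun x => let '(a, b) := x in Cmul (phi NS a) (phi NS b)) t).
Definition sharp (t : T2) (G : NS) : NS :=
  Asum (map (fun x => let '(a, b) := x in mul NS a (mul NS G b)) t).
Definition IdphiId (t : T3) : NS :=
  Asum (map (fun x => let '(a, b, d) := x in scal NS (phi NS b) (mul NS a d)) t).

Definition is_centered_semicircular (T : R) (X : R -> NS) : Prop :=
  (forall t, 0 <= t <= T -> star NS (X t) = X t) /\
  (forall (r : nat) (ts : nat -> R),
     (forall i, (1 <= i <= r)%nat -> 0 <= ts i <= T) ->
     phi NS (Aprod (map (fun i => X (ts i)) (seq 1 r))) =
     if Nat.even r then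
       Csum (map (fun pi => Cprod (map (fun pq =>
                 phi NS (mul NS (X (ts (fst pq))) (X (ts (snd pq))))) pi)) (NC2 r))
     else C0).

Variable X : R -> NS.

Definition Xh (h : step) : NS :=
  Asum (map (fun x => let '(al, a, b) := x in scal NS (RtoC al) (Asub (X b) (X a))) h).

(* <1_[a,b), 1_[c,d)>_H, from <1_[0,s],1_[0,t]>_H = phi(X_s X_t) *)
Definition ind_ip (a b c d : R) : C :=
  Cadd (Csub (Csub (phi NS (mul NS (X b) (X d))) (phi NS (mul NS (X b) (X c))))
             (phi NS (mul NS (X a) (X d))))
       (phi NS (mul NS (X a) (X c))).
Definition ipH (h k : step) : C :=
  Csum (flat_map (fun x => let '(al, a, b) := x in
          map (fun y => let '(be, c, d) := y in Cmul (RtoC (al * be)) (ind_ip a b c d)) k) h).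

(* elements of A_X: formal C-linear combinations of words X(h_1)...X(h_m) *)
Definition AXpoly := list (C * list step).
Definition valid_poly (T : R) (p : AXpoly) : Prop :=
  Forall (fun x => Forall (valid_step T) (snd x)) p.
Definition evalP (p : AXpoly) : NS :=
  Asum (map (fun x => let '(c, w) := x in scal NS c (Aprod (map Xh w))) p).

(* D^X : A_X -> E([0,T]; A_X (x) A_X) *)
Definition DX_word (c : C) (w : list step) : list (T2 * step) :=
  map (fun i => ([(scal NS c (Aprod (map Xh (firstn i w))),
                   Aprod (map Xh (skipn (Datatypes.S i) w)))], nth i w []))
      (seq 0 (length w)).
Definition DX (p : AXpoly) : list (T2 * step) :=
  flat_map (fun x => let '(c, w) := x in DX_word c w) p.

(* elements of A_X (x) A_X: formal sums of F1 (x) F2 with F1, F2 in A_X *)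
Definition PT2 := list (AXpoly * AXpoly).
Definition evalPT2 (x : PT2) : T2 := map (fun y => let '(p1, p2) := y in (evalP p1, evalP p2)) x.

(* D^X = D^X_1 + D^X_2 on A_X (x) A_X, valued in E([0,T]; A_X^{(x)3}) *)
Definition DX2 (x : PT2) : list (T3 * step) :=
  flat_map (fun y => let '(p1, p2) := y in
     map (fun z => let '(t, k) := z in
            (map (fun ab => let '(a, b) := ab in (a, b, evalP p2)) t, k)) (DX p1)
  ++ map (fun z => let '(t, k) := z in
            (map (fun ab => let '(a, b) := ab in (evalP p1, a, b)) t, k)) (DX p2)) x.

Definition pairE3 (E : list (T3 * step)) (h : step) : T3 :=
  flat_map (fun z => let '(t, k) := z in T3scal (ipH k h) t) E.

(* E([0,T]; A_X (x) A_X) *)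
Definition EU := list (PT2 * step).
Definition valid_EU (T : R) (U : EU) : Prop :=
  Forall (fun z => valid_step T (snd z) /\
            Forall (fun y => valid_poly T (fst y) /\ valid_poly T (snd y)) (fst z)) U.

Definition deltaX (U : EU) : NS :=
  Asum (map (fun z => let '(x, h) := z in
     Asub (sharp (evalPT2 x) (Xh h)) (IdphiId (pairE3 (DX2 x) h))) U).

Definition EUstar (U : EU) : list (T2 * step) :=
  map (fun z => let '(x, h) := z in (T2star (evalPT2 x), h)) U.

Definition pairSemi (E F : list (T2 * step)) : T2 :=
  flat_map (fun z => let '(x, h) := z in
     flat_map (fun w => let '(y, k) := w in T2scal (ipH h k) (T2mul x y)) F) E.

End Constructions.

From Stdlib Require Import Reals List Lra Lia Sorting Bool.
Import ListNotations.
Open Scope R_scope.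

(* Both sides are conjugate-linear in [U] and linear in [Y], so it suffices to take
   [Y = W(w) := X(h_1) ... X(h_m)] and [U = (W(w1) (x) W(w2)) h]. Grouping the non-crossing
   pairings by the partner of the first point (a pairing containing {1, j} is a pairing of the
   points between 1 and j together with one of the points after j), the free Wick formula
   becomes the recursion
     phi (X(k) W(v)) = sum_{v = a g b} <k, g> phi (W(a)) phi (W(b)).
   By traciality, phi (W(w) star (W(w1) X(h) W(w2))) = phi (X(h) W(rev w1 ++ w ++ rev w2)).
   In its expansion the terms pairing X(h) with a factor of [w1] or [w2] are exactly the
   contraction terms (Id x phi x Id) <D W(w1) (x) W(w2), h> of the divergence, and the
   terms pairing X(h) with a factor of [w] add up to (phi x phi) <D W(w); star U>. *)

Lemma C_ext (a b : C) : Re a = Re b -> Im a = Im b -> a = b.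
Proof. destruct a, b; simpl; intros; subst; reflexivity. Qed.

Lemma C_ring_theory : ring_theory C0 C1 Cadd Cmul Csub Copp (@eq C).
Proof.
  constructor; intros; apply C_ext; unfold Cadd, Cmul, Csub, Copp, C0, C1; simpl; ring.
Qed.
Add Ring C_ring : C_ring_theory.

Ltac C_componentwise :=
  apply C_ext; unfold Cadd, Cmul, Csub, Copp, Cconj, C0, C1, RtoC; simpl; try ring.

Lemma Cadd_C0_r z : Cadd z C0 = z.
Proof. ring. Qed.

Lemma Cconj_mul a b : Cconj (Cmul a b) = Cmul (Cconj a) (Cconj b).
Proof. C_componentwise. Qed.
Lemma Cconj_opp a : Cconj (Copp a) = Copp (Cconj a).
Proof. C_componentwise. Qed.
Lemma Cconj_C0 : Cconj C0 = C0.
Proof. C_componentwise. Qed.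
Lemma Cconj_C1 : Cconj C1 = C1.
Proof. C_componentwise. Qed.
Lemma Cconj_RtoC r : Cconj (RtoC r) = RtoC r.
Proof. C_componentwise. Qed.
Lemma RtoC_mul a b : RtoC (a * b) = Cmul (RtoC a) (RtoC b).
Proof. C_componentwise. Qed.

Lemma Csum_app l1 l2 : Csum (l1 ++ l2) = Cadd (Csum l1) (Csum l2).
Proof. induction l1; simpl; [ring | rewrite IHl1; ring]. Qed.

Lemma Csum_rev l : Csum (rev l) = Csum l.
Proof. induction l; simpl; auto. rewrite Csum_app, IHl; simpl; ring. Qed.

Section Csum_map.
Context {A : Type}.

Lemma Csum_map_ext (f g : A -> C) l :
  (forall x, In x l -> f x = g x) -> Csum (map f l) = Csum (map g l).
Proof. intros H; f_equal; apply map_ext_in; auto. Qed.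

Lemma Csum_map_C0 (l : list A) : Csum (map (fun _ => C0) l) = C0.
Proof. induction l; simpl; auto. rewrite IHl; ring. Qed.

Lemma Csum_map_add (f g : A -> C) l :
  Csum (map (fun x => Cadd (f x) (g x)) l) = Cadd (Csum (map f l)) (Csum (map g l)).
Proof. induction l; simpl; [ring | rewrite IHl; ring]. Qed.

Lemma Csum_map_mul_l c (f : A -> C) l :
  Csum (map (fun x => Cmul c (f x)) l) = Cmul c (Csum (map f l)).
Proof. induction l; simpl; [ring | rewrite IHl; ring]. Qed.

Lemma Csum_map_mul_r c (f : A -> C) l :
  Csum (map (fun x => Cmul (f x) c) l) = Cmul (Csum (map f l)) c.
Proof. induction l; simpl; [ring | rewrite IHl; ring]. Qed.

Lemma Csum_flat (f : A -> list C) l :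
  Csum (flat_map f l) = Csum (map (fun x => Csum (f x)) l).
Proof. induction l; simpl; auto. rewrite Csum_app, IHl; auto. Qed.

Lemma Csum_map_flat_map {B} (f : A -> list B) (g : B -> C) l :
  Csum (map g (flat_map f l)) = Csum (map (fun x => Csum (map g (f x))) l).
Proof. induction l; simpl; auto. rewrite map_app, Csum_app, IHl; auto. Qed.

End Csum_map.

Lemma Csum_swap {A B} (f : A -> B -> C) l1 l2 :
  Csum (map (fun x => Csum (map (fun y => f x y) l2)) l1) =
  Csum (map (fun y => Csum (map (fun x => f x y) l1)) l2).
Proof.
  induction l1 as [|x l1 IH]; simpl.
  - rewrite Csum_map_C0; auto.
  - rewrite IH, <- Csum_map_add. auto.
Qed.

(** * The algebra of an NC probability space *)

Section Algebra.
Variable NS : NCProbSpace.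

Lemma add_0_l x : add NS (zero NS) x = x.
Proof. rewrite add_comm, add_zero; auto. Qed.

Lemma add_diag_eq x : add NS x x = x -> x = zero NS.
Proof.
  intros H. assert (E : add NS (add NS x x) (opp NS x) = add NS x (opp NS x)) by (rewrite H; auto).
  rewrite <- add_assoc, add_opp, add_zero in E. exact E.
Qed.

Lemma scal_C0 x : scal NS C0 x = zero NS.
Proof. apply add_diag_eq. rewrite <- scal_add_l. f_equal. ring. Qed.

Lemma scal_zero c : scal NS c (zero NS) = zero NS.
Proof. rewrite <- (scal_C0 (zero NS)), scal_assoc. f_equal. ring. Qed.

Lemma opp_scal x : opp NS x = scal NS (Copp C1) x.
Proof.
  assert (E : add NS x (scal NS (Copp C1) x) = zero NS).
  { rewrite <- (scal_one NS x) at 1. rewrite <- scal_add_l.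
    replace (Cadd C1 (Copp C1)) with C0 by ring. apply scal_C0. }
  assert (E2 : add NS (opp NS x) (add NS x (scal NS (Copp C1) x)) = opp NS x)
    by (rewrite E, add_zero; auto).
  rewrite add_assoc, (add_comm NS (opp NS x) x), add_opp, add_0_l in E2. auto.
Qed.

Lemma Asub_scal a b : Asub NS a b = add NS a (scal NS (Copp C1) b).
Proof. unfold Asub; rewrite opp_scal; auto. Qed.

Lemma mul_zero_l x : mul NS (zero NS) x = zero NS.
Proof. rewrite <- (scal_C0 (zero NS)), mul_scal_l, !scal_C0. auto. Qed.
Lemma mul_zero_r x : mul NS x (zero NS) = zero NS.
Proof. rewrite <- (scal_C0 (zero NS)), mul_scal_r, !scal_C0. auto. Qed.
Lemma phi_zero : phi NS (zero NS) = C0.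
Proof. rewrite <- (scal_C0 (zero NS)), phi_scal. ring. Qed.
Lemma star_zero : star NS (zero NS) = zero NS.
Proof. rewrite <- (scal_C0 (zero NS)), star_scal, Cconj_C0, !scal_C0. auto. Qed.

Lemma star_one : star NS (one NS) = one NS.
Proof.
  rewrite <- (star_star NS (one NS)) at 2.
  rewrite <- (mul_one_r NS (star NS (one NS))) at 2.
  rewrite star_mul, star_star, mul_one_r. auto.
Qed.

(* Reality of phi on [star y * y] for [y = 1 + x] and [y = 1 + i x] forces
   [phi (star x) + phi x] and [i (phi x - phi (star x))] to be real. *)
Lemma phi_star x : phi NS (star NS x) = Cconj (phi NS x).
Proof.
  assert (H1 := proj2 (phi_pos NS (add NS (one NS) x))).
  assert (H2 := proj2 (phi_pos NS (add NS (one NS) (scal NS (mkC 0 1) x)))).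
  assert (H0 := proj2 (phi_pos NS x)).
  let expand H := repeat rewrite ?star_add, ?star_scal, ?star_one, ?mul_add_l, ?mul_add_r,
    ?mul_one_l, ?mul_one_r, ?mul_scal_l, ?mul_scal_r, ?phi_add, ?phi_scal, ?scal_assoc,
    ?phi_one in H in
  expand H1; expand H2.
  destruct (phi NS (star NS x)) as [a b], (phi NS x) as [c d],
    (phi NS (mul NS (star NS x) x)) as [e f].
  unfold Cconj, Cadd, Cmul, C1 in *; simpl in *. apply C_ext; simpl; lra.
Qed.

Lemma Asum_app l1 l2 : Asum NS (l1 ++ l2) = add NS (Asum NS l1) (Asum NS l2).
Proof. induction l1; simpl; [rewrite add_0_l | rewrite IHl1, add_assoc]; auto. Qed.

Lemma Asum_flat_map {A} (f : A -> list NS) l :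
  Asum NS (flat_map f l) = Asum NS (map (fun x => Asum NS (f x)) l).
Proof. induction l; simpl; auto. rewrite Asum_app, IHl; auto. Qed.

Lemma Asum_map_scal {A} (f : A -> NS) c l :
  Asum NS (map (fun x => scal NS c (f x)) l) = scal NS c (Asum NS (map f l)).
Proof. induction l; simpl; [rewrite scal_zero | rewrite IHl, scal_add_r]; auto. Qed.

Lemma phi_Asum l : phi NS (Asum NS l) = Csum (map (phi NS) l).
Proof. induction l; simpl; [apply phi_zero | rewrite phi_add, IHl; auto]. Qed.

Lemma star_Asum l : star NS (Asum NS l) = Asum NS (map (star NS) l).
Proof. induction l; simpl; [apply star_zero | rewrite star_add, IHl; auto]. Qed.

Lemma mul_Asum_l l y : mul NS (Asum NS l) y = Asum NS (map (fun x => mul NS x y) l).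
Proof. induction l; simpl; [apply mul_zero_l | rewrite mul_add_l, IHl; auto]. Qed.

Lemma mul_Asum_r l y : mul NS y (Asum NS l) = Asum NS (map (fun x => mul NS y x) l).
Proof. induction l; simpl; [apply mul_zero_r | rewrite mul_add_r, IHl; auto]. Qed.

Lemma Asub_add a b c d :
  Asub NS (add NS a b) (add NS c d) = add NS (Asub NS a c) (Asub NS b d).
Proof.
  rewrite !Asub_scal, scal_add_r, <- !add_assoc. f_equal.
  rewrite !add_assoc. f_equal. apply add_comm.
Qed.

Lemma Asub_Asum {A} (f g : A -> NS) l :
  Asub NS (Asum NS (map f l)) (Asum NS (map g l)) = Asum NS (map (fun x => Asub NS (f x) (g x)) l).
Proof.
  induction l as [|x l IH]; simpl.
  - rewrite Asub_scal, scal_zero, add_zero; auto.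
  - rewrite Asub_add, IH; auto.
Qed.

Lemma Aprod_app l1 l2 : Aprod NS (l1 ++ l2) = mul NS (Aprod NS l1) (Aprod NS l2).
Proof. induction l1; simpl; [rewrite mul_one_l | rewrite IHl1, mul_assoc]; auto. Qed.

Lemma star_Aprod l : star NS (Aprod NS l) = Aprod NS (rev (map (star NS) l)).
Proof.
  induction l; simpl; [apply star_one|].
  rewrite star_mul, IHl, Aprod_app; simpl. rewrite mul_one_r; auto.
Qed.

End Algebra.

(** * Splittings of a list and the recursive Wick sum *)

Fixpoint splits {A} (l : list A) : list (list A * A * list A) :=
  match l with
  | [] => []
  | x :: r => ([], x, r) :: map (fun '(a, y, b) => (x :: a, y, b)) (splits r)
  end.

Lemma in_splits {A} (l : list A) a y b : In (a, y, b) (splits l) -> l = a ++ y :: b.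
Proof.
  revert a y b; induction l as [|x r IH]; simpl; intros a y b H; [contradiction|].
  destruct H as [H|H]; [inversion H; auto|].
  apply in_map_iff in H as [[[a' y'] b'] [E H]]. inversion E; subst.
  rewrite (IH _ _ _ H); auto.
Qed.

Lemma in_splits_length {A} (l : list A) a y b : In (a, y, b) (splits l) ->
  length l = S (length a + length b).
Proof. intros H; rewrite (in_splits _ _ _ _ H), length_app; simpl; lia. Qed.

Lemma in_splits_Forall {A} (P : A -> Prop) l a y b : Forall P l -> In (a, y, b) (splits l) ->
  Forall P a /\ P y /\ Forall P b.
Proof.
  intros H Hin. apply in_splits in Hin. subst. apply Forall_app in H as [H1 H2].
  inversion H2; subst; auto.
Qed.

Lemma splits_app {A} (l1 l2 : list A) : splits (l1 ++ l2) =
  map (fun '(a, y, b) => (a, y, b ++ l2)) (splits l1) ++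
  map (fun '(a, y, b) => (l1 ++ a, y, b)) (splits l2).
Proof.
  induction l1 as [|x r IH]; simpl.
  - rewrite <- (map_id (splits l2)) at 1. apply map_ext. intros [[a y] b]; auto.
  - rewrite IH, map_app, !map_map. f_equal. f_equal; apply map_ext; intros [[a y] b]; auto.
Qed.

Lemma splits_map {A B} (f : A -> B) l : splits (map f l) =
  map (fun '(a, y, b) => (map f a, f y, map f b)) (splits l).
Proof.
  induction l as [|x r IH]; simpl; auto. rewrite IH, !map_map. f_equal.
  apply map_ext; intros [[a y] b]; auto.
Qed.

Lemma splits_rev {A} (l : list A) : splits (rev l) =
  rev (map (fun '(a, y, b) => (rev b, y, rev a)) (splits l)).
Proof.
  induction l as [|x r IH]; simpl; auto. rewrite splits_app, IH. simpl.
  rewrite map_rev, map_map, app_nil_r, map_map. f_equal. f_equal.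
  apply map_ext; intros [[a y] b]; auto.
Qed.

Lemma splits_firstn_skipn {A} (w : list A) d :
  map (fun i => (firstn i w, nth i w d, skipn (S i) w)) (seq 0 (length w)) = splits w.
Proof.
  induction w as [|x r IH]; simpl; auto.
  f_equal. rewrite <- seq_shift, map_map, <- IH, map_map. auto.
Qed.

Lemma map_nth_seq {A} (l : list A) d : forall k,
  map (fun i => nth (i - k) l d) (seq k (length l)) = l.
Proof.
  induction l as [|x r IH]; intros k; simpl; auto. rewrite Nat.sub_diag. f_equal.
  rewrite <- (IH (S k)) at 2. apply map_ext_in. intros i Hi. apply in_seq in Hi.
  replace (i - k)%nat with (S (i - S k)) by lia. auto.
Qed.

(* [pair_sum c n l]: the free Wick sum over the non-crossing pairings of [l],
   computed by pairing the head of [l] with each later element; [n] is fuel. *)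
Fixpoint pair_sum {A} (c : A -> A -> C) (n : nat) (l : list A) : C :=
  match l with
  | [] => C1
  | x :: r =>
      match n with
      | O => C0
      | S n' => Csum (map (fun '(a, y, b) =>
                  Cmul (c x y) (Cmul (pair_sum c n' a) (pair_sum c n' b))) (splits r))
      end
  end.

Lemma pair_sum_fuel {A} (c : A -> A -> C) n : forall m l,
  (length l <= n)%nat -> (length l <= m)%nat -> pair_sum c n l = pair_sum c m l.
Proof.
  induction n as [|n IH]; intros m l H1 H2.
  - destruct l; simpl in *; [destruct m; auto | lia].
  - destruct l as [|x r]; [destruct m; auto|]. destruct m as [|m]; [simpl in H2; lia|].
    simpl. apply Csum_map_ext. intros [[a y] b] Hin. apply in_splits_length in Hin.
    simpl in H1, H2. rewrite (IH m a), (IH m b); auto; lia.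
Qed.

Lemma pair_sum_cons {A} (c : A -> A -> C) x r :
  pair_sum c (length (x :: r)) (x :: r) =
  Csum (map (fun '(a, y, b) =>
    Cmul (c x y) (Cmul (pair_sum c (length a) a) (pair_sum c (length b) b))) (splits r)).
Proof.
  simpl. apply Csum_map_ext. intros [[a y] b] Hin. apply in_splits_length in Hin.
  rewrite (pair_sum_fuel c (length r) (length a) a), (pair_sum_fuel c (length r) (length b) b);
    auto; lia.
Qed.

Lemma pair_sum_map {A B} (c : B -> B -> C) (f : A -> B) n l :
  pair_sum c n (map f l) = pair_sum (fun i j => c (f i) (f j)) n l.
Proof.
  revert l; induction n as [|n IH]; intros l; destruct l as [|x r]; simpl; auto.
  rewrite splits_map, map_map. apply Csum_map_ext. intros [[a y] b] _. rewrite !IH; auto.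
Qed.

Lemma pair_sum_odd {A} (c : A -> A -> C) n : forall l, (length l <= n)%nat ->
  Nat.Odd (length l) -> pair_sum c n l = C0.
Proof.
  induction n as [|n IH]; intros l Hl [m Hm]; destruct l as [|x r]; simpl in *; try lia; auto.
  rewrite <- (Csum_map_C0 (splits r)). apply Csum_map_ext. intros [[a y] b] Hin.
  apply in_splits_length in Hin. destruct (Nat.Even_or_Odd (length a)) as [[p Hp]|[p Hp]].
  - rewrite (IH b); [ring|lia|]. exists (m - p - 1)%nat. lia.
  - rewrite (IH a); [ring|lia|]. exists p; lia.
Qed.

(** * Non-crossing pairings *)

Notation increasing := (StronglySorted lt).

Lemma increasing_cons_iff (x : nat) l :
  increasing (x :: l) <-> increasing l /\ (forall u, In u l -> (x < u)%nat).
Proof.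
  split; [intros H; apply StronglySorted_inv in H as [H1 H2]; rewrite Forall_forall in H2; auto|].
  intros [H1 H2]; constructor; auto; rewrite Forall_forall; auto.
Qed.

Lemma increasing_app_iff (l1 l2 : list nat) : increasing (l1 ++ l2) <->
  increasing l1 /\ increasing l2 /\ (forall u v, In u l1 -> In v l2 -> (u < v)%nat).
Proof.
  induction l1 as [|x r IH]; simpl.
  - split; [intros H; repeat split; auto; [constructor | tauto] | tauto].
  - rewrite !increasing_cons_iff, IH. split.
    + intros [[A1 [A2 A3]] H]. repeat split; auto.
      * intros; apply H, in_or_app; auto.
      * intros u v [E|E] Hv; subst; auto. apply H, in_or_app; auto.
    + intros [[A1 B1] [A2 A3]]. repeat split; auto.
      intros z Hz. apply in_app_or in Hz as [Hz|Hz]; auto.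
Qed.

Lemma increasing_remove (l : list nat) y : increasing l -> increasing (remove Nat.eq_dec y l).
Proof.
  induction l as [|x r IH]; simpl; intros H; auto.
  apply increasing_cons_iff in H as [H1 H2]. destruct (Nat.eq_dec y x); auto.
  apply increasing_cons_iff; split; auto. intros u Hu. apply in_remove in Hu as [Hu _]; auto.
Qed.

Lemma increasing_NoDup (l : list nat) : increasing l -> NoDup l.
Proof.
  induction l as [|x r IH]; intros H; constructor; apply increasing_cons_iff in H as [H1 H2].
  - intros Hx; specialize (H2 _ Hx); lia.
  - auto.
Qed.

Lemma increasing_seq s r : increasing (seq s r).
Proof.
  revert s; induction r; intros s; simpl; [constructor|].
  apply increasing_cons_iff; split; auto. intros u Hu. apply in_seq in Hu. lia.
Qed.

Lemma in_pairings n : forall (l : list nat) pi q, increasing l -> In pi (pairings n l) -> In q pi ->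
  In (fst q) l /\ In (snd q) l /\ (fst q < snd q)%nat.
Proof.
  induction n as [|n IH]; intros l pi q HS Hpi Hq; destruct l as [|x rest]; simpl in Hpi.
  - destruct Hpi as [E|[]]; subst; destruct Hq.
  - destruct Hpi.
  - destruct Hpi as [E|[]]; subst; destruct Hq.
  - apply in_flat_map in Hpi as [y [Hy Hpi]]. apply in_map_iff in Hpi as [pi' [E Hpi']]. subst.
    apply increasing_cons_iff in HS as [HS1 HS2].
    destruct Hq as [E|Hq]; [subst; simpl; auto|].
    destruct (IH _ _ _ (increasing_remove _ y HS1) Hpi' Hq) as [A1 [A2 A3]].
    apply in_remove in A1, A2. simpl; tauto.
Qed.

Lemma flat_map_remove_splits {B} (l : list nat) : NoDup l ->
  forall (g : nat -> list nat -> list B),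
  flat_map (fun y => g y (remove Nat.eq_dec y l)) l =
  flat_map (fun '(a, y, b) => g y (a ++ b)) (splits l).
Proof.
  induction l as [|x r IH]; intros HN g; simpl; auto.
  inversion HN as [|? ? Hx HN']; subst.
  destruct (Nat.eq_dec x x) as [_|]; [|congruence].
  rewrite notin_remove by auto. f_equal.
  transitivity (flat_map (fun y => g y (x :: remove Nat.eq_dec y r)) r).
  - rewrite !flat_map_concat_map. f_equal. apply map_ext_in. intros y Hy.
    destruct (Nat.eq_dec y x); [subst; contradiction | auto].
  - rewrite (IH HN' (fun y l => g y (x :: l))), !flat_map_concat_map, map_map.
    f_equal. apply map_ext. intros [[a y] b]. auto.
Qed.

Definition inb (x : nat) (l : list nat) : bool := existsb (Nat.eqb x) l.

Lemma inb_iff x l : inb x l = true <-> In x l.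
Proof.
  unfold inb. rewrite existsb_exists. split.
  - intros [y [Hy E]]. apply Nat.eqb_eq in E; subst; auto.
  - intros H; exists x; split; auto; apply Nat.eqb_refl.
Qed.

Lemma inb_app x l1 l2 : inb x (l1 ++ l2) = inb x l1 || inb x l2.
Proof. apply existsb_app. Qed.

Definition in_one_block (Ls : list (list nat)) (q : nat * nat) : bool :=
  existsb (fun L => inb (fst q) L && inb (snd q) L) Ls.

Lemma in_one_block_in Ls c d : in_one_block Ls (c, d) = true ->
  In c (concat Ls) /\ In d (concat Ls).
Proof.
  unfold in_one_block; rewrite existsb_exists. intros [L [HL E]].
  apply andb_true_iff in E as [E1 E2]. simpl in *. apply inb_iff in E1, E2.
  split; apply in_concat; eauto.
Qed.

Definition pairing_weight (c : nat -> nat -> C) (pi : list (nat * nat)) : C :=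
  Cprod (map (fun pq => c (fst pq) (snd pq)) pi).

(* Allowing several blocks makes the recursion on the first point inductive: pairing it
   with [y] cuts its block into the points inside and the points outside of [(x, y)]. *)
Definition block_pair_sum (c : nat -> nat -> C) n (Ls : list (list nat)) : C :=
  Csum (map (fun pi => if noncrossingb pi && forallb (in_one_block Ls) pi
                      then pairing_weight c pi else C0)
    (pairings n (concat Ls))).

Lemma block_pair_sum_nil c n : block_pair_sum c n [] = C1.
Proof. unfold block_pair_sum, pairing_weight; destruct n; simpl; ring. Qed.

Lemma forallb_andb {A} (f g : A -> bool) l :
  forallb (fun x => f x && g x) l = forallb f l && forallb g l.
Proof.
  induction l; simpl; auto. rewrite IHl.
  destruct (f a), (g a), (forallb f l), (forallb g l); auto.
Qed.

Lemma forallb_ext_in {A} (f g : A -> bool) l :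
  (forall x, In x l -> f x = g x) -> forallb f l = forallb g l.
Proof. induction l; simpl; intros H; auto. rewrite H, IHl; auto. Qed.

Lemma noncrossingb_cons p pi : noncrossingb (p :: pi) =
  negb (crossing p p) &&
  forallb (fun q => negb (crossing p q) && negb (crossing q p)) pi && noncrossingb pi.
Proof.
  unfold noncrossingb. simpl. rewrite !forallb_andb.
  destruct (negb (crossing p p)), (forallb (fun q => negb (crossing p q)) pi),
    (forallb (fun q => negb (crossing q p)) pi),
    (forallb (fun q => forallb (fun q' => negb (crossing q q')) pi) pi); auto.
Qed.

Ltac case_inb e := let H := fresh "Hb" in destruct e eqn:H;
  [apply inb_iff in H | apply not_true_iff_false in H; rewrite inb_iff in H].

(* Once [x] is paired with [y], a pair [(c, d)] of the remaining points avoids crossing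
   [(x, y)] and stays in a block exactly when it stays inside or outside of [(x, y)]. *)
Lemma in_one_block_after_head_pair x y a b Ls c d :
  increasing (x :: a ++ y :: b ++ concat Ls) ->
  In c (a ++ b ++ concat Ls) -> In d (a ++ b ++ concat Ls) -> (c < d)%nat ->
  negb (crossing (x, y) (c, d)) && negb (crossing (c, d) (x, y)) &&
    in_one_block ((x :: a ++ y :: b) :: Ls) (c, d)
  = in_one_block (a :: b :: Ls) (c, d).
Proof.
  intros HS Hc Hd Hcd. set (R2 := concat Ls) in *.
  apply increasing_cons_iff in HS as [HS Hx]. apply increasing_app_iff in HS as [_ [HS2 Ha]].
  apply increasing_cons_iff in HS2 as [_ Hy].
  assert (Hx' : forall u, In u (a ++ b ++ R2) -> (x < u)%nat).
  { intros u Hu. apply Hx. apply in_app_or in Hu as [Hu|Hu]; apply in_or_app; simpl; auto. }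
  assert (Ha' : forall u, In u a -> (u < y)%nat) by (intros; apply Ha; simpl; auto).
  assert (Hb' : forall u, In u b -> (y < u)%nat) by (intros; apply Hy, in_or_app; auto).
  assert (HR : forall u, In u R2 -> (y < u)%nat) by (intros; apply Hy, in_or_app; auto).
  assert (Hcx := Hx' c Hc). assert (Hdx := Hx' d Hd).
  assert (HSL := in_one_block_in Ls c d). unfold in_one_block in HSL |- *. simpl existsb.
  simpl fst in *; simpl snd in *.
  set (S := existsb (fun L : list nat => inb c L && inb d L) Ls) in *.
  unfold crossing; simpl fst; simpl snd. rewrite !inb_app. simpl inb.
  destruct (Nat.eqb_spec c x); [lia|]. destruct (Nat.eqb_spec d x); [lia|].
  assert (Hc2 : In c a \/ In c b \/ In c R2)
    by (apply in_app_or in Hc as [|Hc]; auto; apply in_app_or in Hc; tauto).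
  assert (Hd2 : In d a \/ In d b \/ In d R2)
    by (apply in_app_or in Hd as [|Hd]; auto; apply in_app_or in Hd; tauto).
  destruct (Nat.eqb_spec c y) as [E|]; [subst c; exfalso|].
  { destruct Hc2 as [Hc2|[Hc2|Hc2]]; [apply Ha' in Hc2 | apply Hb' in Hc2 | apply HR in Hc2]; lia. }
  destruct (Nat.eqb_spec d y) as [E|]; [subst d; exfalso|].
  { destruct Hd2 as [Hd2|[Hd2|Hd2]]; [apply Ha' in Hd2 | apply Hb' in Hd2 | apply HR in Hd2]; lia. }
  destruct (Nat.ltb_spec x c); [|lia]. destruct (Nat.ltb_spec c x); [lia|]. simpl.
  destruct S.
  { destruct (HSL eq_refl) as [HL1 HL2].
    assert (y < c)%nat by (apply HR; auto).
    destruct (Nat.ltb_spec c y); [lia|]. simpl. rewrite !orb_true_r. auto. }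
  clear HSL. rewrite !orb_false_r.
  case_inb (inb c a); case_inb (inb c b); case_inb (inb d a); case_inb (inb d b); simpl;
  try (destruct (Nat.ltb_spec c y); destruct (Nat.ltb_spec y d); simpl; auto);
  repeat match goal with
  | H : forall u, In u ?l -> _, H2 : In ?v ?l |- _ =>
      let h := fresh in assert (h := H v H2); clear H2
  end; try lia.
Qed.

Lemma head_not_in_one_block_with_later x r1 Ls y :
  increasing (x :: r1 ++ concat Ls) -> In y (concat Ls) ->
  in_one_block ((x :: r1) :: Ls) (x, y) = false.
Proof.
  intros HS Hy. apply not_true_iff_false. intros H.
  unfold in_one_block in H. simpl in H. rewrite Nat.eqb_refl in H. simpl in H.
  apply increasing_cons_iff in HS as [HS Hx]. apply increasing_app_iff in HS as [_ [_ H12]].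
  assert (Hxx : ~ (x < x)%nat) by lia.
  apply orb_true_iff in H as [H|H].
  - destruct (Nat.eqb_spec y x) as [E|]; [subst; apply Hxx, Hx, in_or_app; auto|].
    simpl in H. apply inb_iff in H. specialize (H12 _ _ H Hy). lia.
  - apply Hxx, Hx, in_or_app. right. apply (in_one_block_in Ls x y H).
Qed.

Lemma increasing_remove_head_pair x r1 R a y b :
  increasing (x :: r1 ++ R) -> In (a, y, b) (splits r1) -> increasing (a ++ b ++ R).
Proof.
  intros HS Hin. rewrite (in_splits _ _ _ _ Hin) in HS.
  apply increasing_cons_iff in HS as [HS _]. rewrite <- app_assoc in HS.
  apply increasing_app_iff in HS as [H1 [H2 H3]].
  apply increasing_cons_iff in H2 as [H2 _]. apply increasing_app_iff; repeat split; auto.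
  intros u v Hu Hv. apply H3; simpl; auto.
Qed.

Lemma block_pair_sum_head_pair c n x r1 Ls a y b :
  increasing (x :: r1 ++ concat Ls) -> In (a, y, b) (splits r1) ->
  Csum (map (fun pi => if noncrossingb pi && forallb (in_one_block ((x :: r1) :: Ls)) pi
                      then pairing_weight c pi else C0)
         (map (cons (x, y)) (pairings n (a ++ b ++ concat Ls)))) =
  Cmul (c x y) (block_pair_sum c n (a :: b :: Ls)).
Proof.
  intros HS Hin. assert (HS' := increasing_remove_head_pair _ _ _ _ _ _ HS Hin).
  rewrite (in_splits _ _ _ _ Hin) in HS |- *.
  unfold block_pair_sum. simpl concat. rewrite map_map, <- Csum_map_mul_l.
  apply Csum_map_ext. intros pi Hpi.
  rewrite noncrossingb_cons. cbn [forallb].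
  assert (Hxy : in_one_block ((x :: a ++ y :: b) :: Ls) (x, y) = true).
  { unfold in_one_block. cbn [existsb fst snd]. apply orb_true_iff; left.
    apply andb_true_iff; split; apply inb_iff; simpl;
      [left | right; apply in_or_app; simpl]; auto. }
  rewrite Hxy. unfold crossing at 1. simpl fst; simpl snd. rewrite Nat.ltb_irrefl. simpl negb.
  assert (Hcond : forallb (fun q => negb (crossing (x, y) q) && negb (crossing q (x, y))) pi &&
                  forallb (in_one_block ((x :: a ++ y :: b) :: Ls)) pi =
                  forallb (in_one_block (a :: b :: Ls)) pi).
  { rewrite <- forallb_andb. apply forallb_ext_in. intros [c0 d0] Hq.
    destruct (in_pairings _ _ _ _ HS' Hpi Hq) as [A1 [A2 A3]].
    apply in_one_block_after_head_pair; auto. rewrite <- app_assoc in HS. exact HS. }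
  rewrite <- Hcond.
  destruct (forallb (fun q => negb (crossing (x, y) q) && negb (crossing q (x, y))) pi),
    (noncrossingb pi), (forallb (in_one_block ((x :: a ++ y :: b) :: Ls)) pi);
    simpl; unfold pairing_weight; simpl; ring.
Qed.

Lemma block_pair_sum_head c n x r1 Ls :
  increasing (x :: r1 ++ concat Ls) ->
  block_pair_sum c (S n) ((x :: r1) :: Ls) =
  Csum (map (fun '(a, y, b) => Cmul (c x y) (block_pair_sum c n (a :: b :: Ls))) (splits r1)).
Proof.
  intros HS. set (R2 := concat Ls) in *.
  assert (HN : NoDup (r1 ++ R2))
    by (apply increasing_NoDup; apply increasing_cons_iff in HS; tauto).
  unfold block_pair_sum at 1. simpl concat. fold R2. simpl pairings.
  rewrite (flat_map_remove_splits _ HN (fun y l => map (cons (x, y)) (pairings n l))).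
  rewrite Csum_map_flat_map, splits_app, map_app, Csum_app, !map_map.
  rewrite (Csum_map_ext _ (fun _ => C0) (splits R2)).
  2:{ intros [[a y] b] Hin. rewrite map_map.
      transitivity (Csum (map (fun _ => C0) (pairings n ((r1 ++ a) ++ b)))); [|apply Csum_map_C0].
      apply Csum_map_ext. intros pi _. cbn [forallb].
      rewrite head_not_in_one_block_with_later, andb_false_r; auto.
      change (In y R2). rewrite (in_splits _ _ _ _ Hin). apply in_or_app; simpl; auto. }
  rewrite Csum_map_C0, Cadd_C0_r. apply Csum_map_ext. intros [[a y] b] Hin.
  apply block_pair_sum_head_pair; auto.
Qed.

Lemma block_pair_sum_prod c n : forall Ls,
  (length (concat Ls) <= n)%nat -> increasing (concat Ls) ->
  block_pair_sum c n Ls = Cprod (map (fun L => pair_sum c (length L) L) Ls).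
Proof.
  induction n as [|n IH]; intros Ls; induction Ls as [|[|x r1] Ls IHL]; intros Hlen HS;
    try (rewrite block_pair_sum_nil; auto; fail);
    try (change (block_pair_sum c ?m ([] :: Ls)) with (block_pair_sum c m Ls);
         rewrite IHL; auto; simpl; ring; fail).
  - simpl in Hlen; lia.
  - rewrite block_pair_sum_head by auto. cbn [map Cprod fold_right].
    rewrite pair_sum_cons, <- Csum_map_mul_r. apply Csum_map_ext. intros [[a y] b] Hin.
    assert (Hlen' : (length (a ++ b ++ concat Ls) <= n)%nat).
    { rewrite (in_splits _ _ _ _ Hin) in Hlen. simpl in Hlen. rewrite !length_app in *.
      simpl in Hlen. lia. }
    rewrite IH by (simpl; auto; eapply increasing_remove_head_pair; eauto).
    unfold Cprod; simpl. ring.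
Qed.

Lemma NC2_sum_pair_sum c r :
  Csum (map (fun pi => Cprod (map (fun pq => c (fst pq) (snd pq)) pi)) (NC2 r)) =
  pair_sum c r (seq 1 r).
Proof.
  assert (E := block_pair_sum_prod c r [seq 1 r]).
  simpl concat in E. rewrite app_nil_r, length_seq in E.
  specialize (E (le_n _) (increasing_seq 1 r)). simpl in E. rewrite length_seq in E.
  transitivity (Cmul (pair_sum c r (seq 1 r)) C1); [|ring]. rewrite <- E.
  unfold block_pair_sum, NC2. simpl concat. rewrite app_nil_r.
  generalize (fun pi q Hpi Hq => in_pairings r (seq 1 r) pi q (increasing_seq 1 r) Hpi Hq).
  induction (pairings r (seq 1 r)) as [|pi l IHl]; intros Hin; simpl; auto.
  replace (forallb (in_one_block [seq 1 r]) pi) with true.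
  2:{ symmetry. apply forallb_forall. intros [c0 d0] Hq.
      destruct (Hin pi _ (or_introl eq_refl) Hq) as [A1 [A2 _]].
      unfold in_one_block. simpl. rewrite orb_false_r.
      apply andb_true_iff; split; apply inb_iff; auto. }
  rewrite andb_true_r.
  destruct (noncrossingb pi); simpl; rewrite IHl; try ring; auto;
    intros; eapply Hin; eauto; right; auto.
Qed.

(** * Moments of the semicircular process *)

Section Linear_functionals.
Variable NS : NCProbSpace.

Definition is_linear (f : NS -> C) : Prop :=
  (forall x y, f (add NS x y) = Cadd (f x) (f y)) /\
  (forall c x, f (scal NS c x) = Cmul c (f x)).

Lemma is_linear_ext (f g : NS -> C) : (forall z, f z = g z) -> is_linear g -> is_linear f.
Proof. intros E [H1 H2]; split; intros; rewrite !E; auto. Qed.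

Lemma is_linear_add f g : is_linear f -> is_linear g -> is_linear (fun z => Cadd (f z) (g z)).
Proof. intros [A1 A2] [B1 B2]; split; intros; rewrite ?A1, ?A2, ?B1, ?B2; ring. Qed.

Lemma is_linear_sub f g : is_linear f -> is_linear g -> is_linear (fun z => Csub (f z) (g z)).
Proof. intros [A1 A2] [B1 B2]; split; intros; unfold Csub; rewrite ?A1, ?A2, ?B1, ?B2; ring. Qed.

Lemma is_linear_mul_l f k : is_linear f -> is_linear (fun z => Cmul k (f z)).
Proof. intros [A1 A2]; split; intros; rewrite ?A1, ?A2; ring. Qed.

Lemma is_linear_mul_r f k : is_linear f -> is_linear (fun z => Cmul (f z) k).
Proof. intros [A1 A2]; split; intros; rewrite ?A1, ?A2; ring. Qed.

Lemma is_linear_Csum {A} (F : A -> NS -> C) l : (forall e, In e l -> is_linear (F e)) ->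
  is_linear (fun z => Csum (map (fun e => F e z) l)).
Proof.
  induction l as [|e l IH]; intros H; simpl; [split; intros; ring|].
  apply (is_linear_add (F e) (fun z => Csum (map (fun e0 => F e0 z) l))); auto with datatypes.
Qed.

Lemma is_linear_phi_Aprod p q : is_linear (fun z => phi NS (Aprod NS (p ++ z :: q))).
Proof.
  split; intros; rewrite !Aprod_app; simpl.
  - rewrite mul_add_l, mul_add_r, phi_add; auto.
  - rewrite mul_scal_l, mul_scal_r, phi_scal; auto.
Qed.

Lemma is_linear_phi_mul_r g : is_linear (fun z => phi NS (mul NS z g)).
Proof. split; intros; [rewrite mul_add_l, phi_add | rewrite mul_scal_l, phi_scal]; auto. Qed.

Lemma is_linear_phi_mul_l g : is_linear (fun z => phi NS (mul NS g z)).
Proof. split; intros; [rewrite mul_add_r, phi_add | rewrite mul_scal_r, phi_scal]; auto. Qed.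

Definition lin_comb (v : list (C * NS)) : NS :=
  Asum NS (map (fun p => scal NS (fst p) (snd p)) v).

Lemma multilinear_vanish (G : list NS -> C) (gen : NS -> Prop) :
  (forall l1 l2, is_linear (fun z => G (l1 ++ z :: l2))) ->
  (forall l, Forall gen l -> G l = C0) ->
  forall vs, Forall (Forall (fun p => gen (snd p))) vs -> G (map lin_comb vs) = C0.
Proof.
  intros Hlin Hgen vs Hvs.
  enough (H : forall pre, Forall gen pre -> G (pre ++ map lin_comb vs) = C0)
    by (apply (H []); constructor).
  induction vs as [|v vs IH]; intros pre Hpre; simpl; [rewrite app_nil_r; auto|].
  inversion Hvs as [|? ? Hv Hvs']; subst. specialize (IH Hvs').
  induction v as [|[c g] v IHv]; unfold lin_comb; simpl.
  - rewrite <- (scal_C0 NS (zero NS)), (proj2 (Hlin pre (map lin_comb vs))). ring.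
  - inversion Hv as [|? ? Hg Hv']; subst.
    rewrite (proj1 (Hlin pre (map lin_comb vs))), (proj2 (Hlin pre (map lin_comb vs))).
    fold (lin_comb v). rewrite IHv by auto.
    replace (pre ++ g :: map lin_comb vs) with ((pre ++ [g]) ++ map lin_comb vs)
      by (rewrite <- app_assoc; auto).
    rewrite IH; [ring|]. apply Forall_app; split; auto.
Qed.

(* Vanishes on lists of samples [X t] by the free Wick formula; being multilinear, it then
   vanishes on lists of increments [X h]. *)
Definition recursion_defect (l : list NS) : C :=
  match l with
  | [] => C0
  | u0 :: us => Csub (phi NS (Aprod NS (u0 :: us)))
      (Csum (map (fun '(a, g, b) => Cmul (phi NS (mul NS u0 g))
          (Cmul (phi NS (Aprod NS a)) (phi NS (Aprod NS b)))) (splits us)))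
  end.

Lemma recursion_defect_later_slot u0 l1 z l2 :
  recursion_defect (u0 :: l1 ++ z :: l2) =
  Csub (phi NS (Aprod NS ((u0 :: l1) ++ z :: l2)))
    (Cadd (Csum (map (fun '(a, g, b) => Cmul (phi NS (mul NS u0 g))
                (Cmul (phi NS (Aprod NS a)) (phi NS (Aprod NS (b ++ z :: l2))))) (splits l1)))
    (Cadd (Cmul (phi NS (mul NS u0 z)) (Cmul (phi NS (Aprod NS l1)) (phi NS (Aprod NS l2))))
          (Csum (map (fun '(a, g, b) => Cmul (phi NS (mul NS u0 g))
                (Cmul (phi NS (Aprod NS (l1 ++ z :: a))) (phi NS (Aprod NS b)))) (splits l2))))).
Proof.
  simpl recursion_defect. rewrite splits_app. simpl splits.
  rewrite map_app, Csum_app. simpl map. rewrite !map_map. simpl Csum. rewrite app_nil_r.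
  f_equal. f_equal.
  - apply Csum_map_ext. intros [[a g] b] _. auto.
  - f_equal. apply Csum_map_ext. intros [[a g] b] _. auto.
Qed.

Lemma recursion_defect_multilinear l1 l2 : is_linear (fun z => recursion_defect (l1 ++ z :: l2)).
Proof.
  destruct l1 as [|u0 l1].
  - apply is_linear_sub; [apply (is_linear_phi_Aprod [])|].
    apply is_linear_Csum. intros [[a g] b] _. apply is_linear_mul_r, is_linear_phi_mul_r.
  - eapply is_linear_ext; [intros z; apply recursion_defect_later_slot|].
    apply is_linear_sub; [apply is_linear_phi_Aprod|].
    apply is_linear_add; [|apply is_linear_add].
    + apply is_linear_Csum. intros [[a g] b] _.
      apply is_linear_mul_l, is_linear_mul_l, is_linear_phi_Aprod.
    + apply is_linear_mul_r, is_linear_phi_mul_l.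
    + apply is_linear_Csum. intros [[a g] b] _.
      apply is_linear_mul_l, is_linear_mul_r, is_linear_phi_Aprod.
Qed.

End Linear_functionals.

Section Semicircular_process.
Variables (NS : NCProbSpace) (T : R) (X : R -> NS).
Hypothesis HX : is_centered_semicircular NS T X.

Definition Xword (v : list step) : NS := Aprod NS (map (Xh NS X) v).

Lemma Xword_app v1 v2 : Xword (v1 ++ v2) = mul NS (Xword v1) (Xword v2).
Proof. unfold Xword. rewrite map_app, Aprod_app; auto. Qed.

Lemma star_Xh h : valid_step T h -> star NS (Xh NS X h) = Xh NS X h.
Proof.
  intros Hv. unfold Xh. rewrite star_Asum, map_map. f_equal. apply map_ext_in.
  intros [[al a] b] Hin. unfold valid_step in Hv; rewrite Forall_forall in Hv.
  specialize (Hv _ Hin). simpl in Hv.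
  unfold Asub. rewrite star_scal, Cconj_RtoC, star_add, opp_scal, star_scal, !(proj1 HX) by lra.
  rewrite Cconj_opp, Cconj_C1. auto.
Qed.

Lemma star_Xword v : Forall (valid_step T) v -> star NS (Xword v) = Xword (rev v).
Proof.
  intros Hv. unfold Xword. rewrite star_Aprod, map_map, map_rev. do 2 f_equal.
  apply map_ext_in. intros h Hin. rewrite Forall_forall in Hv. apply star_Xh; auto.
Qed.

Lemma phi_Xh_mul h k : phi NS (mul NS (Xh NS X h) (Xh NS X k)) = ipH NS X h k.
Proof.
  unfold Xh, ipH. rewrite mul_Asum_l, phi_Asum, !map_map, Csum_flat.
  f_equal. apply map_ext. intros [[al a] b].
  rewrite mul_Asum_r, phi_Asum, !map_map. f_equal. apply map_ext. intros [[be c] d].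
  unfold Asub, ind_ip, Csub. rewrite !opp_scal, mul_scal_l, mul_scal_r, !mul_add_l, !mul_add_r,
    !mul_scal_l, !mul_scal_r, !phi_scal, !phi_add, !phi_scal, RtoC_mul. ring.
Qed.

Lemma ipH_comm h k : ipH NS X h k = ipH NS X k h.
Proof. rewrite <- !phi_Xh_mul, phi_trace; auto. Qed.

Lemma Cconj_ipH h k : valid_step T h -> valid_step T k -> Cconj (ipH NS X h k) = ipH NS X h k.
Proof.
  intros. rewrite <- phi_Xh_mul, <- phi_star, star_mul, !star_Xh by auto.
  apply phi_trace.
Qed.

Definition covariance (t s : R) : C := phi NS (mul NS (X t) (X s)).

Lemma phi_Aprod_X ts : Forall (fun t => 0 <= t <= T) ts ->
  phi NS (Aprod NS (map X ts)) = pair_sum covariance (length ts) ts.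
Proof.
  intros Hts. destruct HX as [_ Hwick]. set (r := length ts).
  set (tsf := fun i => nth (i - 1) ts 0).
  assert (E1 : map (fun i => X (tsf i)) (seq 1 r) = map X ts).
  { rewrite <- (map_map tsf X). unfold tsf, r. rewrite map_nth_seq. auto. }
  assert (Hr : forall i, (1 <= i <= r)%nat -> 0 <= tsf i <= T).
  { intros i Hi. rewrite Forall_forall in Hts. apply Hts, nth_In. unfold r in Hi. lia. }
  rewrite <- E1, (Hwick r tsf Hr).
  destruct (Nat.even r) eqn:Ev.
  - rewrite (NC2_sum_pair_sum (fun i j => phi NS (mul NS (X (tsf i)) (X (tsf j))))).
    rewrite <- (pair_sum_map covariance tsf). unfold tsf, r. rewrite map_nth_seq. auto.
  - symmetry. apply pair_sum_odd; auto. apply Nat.odd_spec. fold r.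
    rewrite <- Nat.negb_even, Ev. auto.
Qed.

Lemma phi_X_mul_Aprod_X t0 ts : 0 <= t0 <= T -> Forall (fun t => 0 <= t <= T) ts ->
  phi NS (mul NS (X t0) (Aprod NS (map X ts))) =
  Csum (map (fun '(a, s, b) => Cmul (covariance t0 s)
    (Cmul (phi NS (Aprod NS (map X a))) (phi NS (Aprod NS (map X b))))) (splits ts)).
Proof.
  intros H0 Hts.
  change (mul NS (X t0) (Aprod NS (map X ts))) with (Aprod NS (map X (t0 :: ts))).
  rewrite phi_Aprod_X by (constructor; auto).
  rewrite pair_sum_cons. apply Csum_map_ext. intros [[a s] b] Hin.
  apply in_splits in Hin. subst ts. apply Forall_app in Hts as [Ha Hb]. inversion Hb.
  rewrite !phi_Aprod_X; auto.
Qed.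

Definition increments (h : step) : list (C * NS) :=
  flat_map (fun '(al, a, b) => [(RtoC al, X b); (RtoC (- al), X a)]) h.

Lemma lin_comb_increments h : lin_comb NS (increments h) = Xh NS X h.
Proof.
  unfold lin_comb, increments, Xh. induction h as [|[[al a] b] h IH]; simpl; auto.
  rewrite IH. simpl. rewrite add_assoc. f_equal.
  unfold Asub. rewrite opp_scal, scal_add_r, scal_assoc. do 2 f_equal. C_componentwise.
Qed.

Definition is_sample (x : NS) : Prop := exists t, 0 <= t <= T /\ x = X t.

Lemma increments_samples h : valid_step T h -> Forall (fun p => is_sample (snd p)) (increments h).
Proof.
  unfold valid_step, increments. induction 1 as [|[[al a] b] h [[H1 H2] H3] Hh IH]; simpl; auto.
  repeat constructor; auto; [exists b | exists a]; split; auto; lra.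
Qed.

Lemma samples_as_map l : Forall is_sample l ->
  exists ts, l = map X ts /\ Forall (fun t => 0 <= t <= T) ts.
Proof.
  induction 1 as [|x l [t [Ht E]] _ [ts [El Hts]]]; [exists (@nil R); auto|].
  exists (t :: ts); subst; auto.
Qed.

Lemma recursion_defect_samples l : Forall is_sample l -> recursion_defect NS l = C0.
Proof.
  intros Hl. destruct (samples_as_map l Hl) as [ts [El Hts]]. subst l.
  destruct ts as [|t0 ts]; simpl; auto. inversion Hts; subst.
  rewrite splits_map, map_map. unfold Csub.
  change (mul NS (X t0) (Aprod NS (map X ts))) with (Aprod NS (map X (t0 :: ts))).
  simpl map. cbn [Aprod fold_right]. fold (Aprod NS (map X ts)).
  rewrite phi_X_mul_Aprod_X by auto.
  match goal with |- Cadd ?A (Copp ?B) = _ => replace B with A; [ring|] end.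
  apply Csum_map_ext. intros [[a s] b] _. auto.
Qed.

Lemma phi_Xh_mul_Xword k vs : valid_step T k -> Forall (valid_step T) vs ->
  phi NS (mul NS (Xh NS X k) (Xword vs)) =
  Csum (map (fun '(a, g, b) => Cmul (ipH NS X k g) (Cmul (phi NS (Xword a)) (phi NS (Xword b))))
    (splits vs)).
Proof.
  intros Hk Hvs.
  assert (E := multilinear_vanish NS (recursion_defect NS) is_sample
     (recursion_defect_multilinear NS) recursion_defect_samples (map increments (k :: vs))).
  rewrite map_map, (map_ext _ _ lin_comb_increments) in E. simpl in E.
  unfold Xword. rewrite splits_map, map_map in E.
  specialize (E (Forall_cons _ (increments_samples k Hk)
                   (proj2 (Forall_map _ _ _) (Forall_impl _ increments_samples Hvs)))).
  unfold Csub in E.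
  match goal with
  | E : Cadd ?A (Copp ?B) = C0 |- ?A = ?D =>
     transitivity B; [transitivity (Cadd (Cadd A (Copp B)) B); [ring|]; rewrite E; ring|]
  end.
  apply Csum_map_ext. intros [[a g] b] _. rewrite phi_Xh_mul. auto.
Qed.

End Semicircular_process.

Arguments star_Xh {NS T X} HX h _.
Arguments star_Xword {NS T X} HX v _.
Arguments Cconj_ipH {NS T X} HX h k _ _.
Arguments phi_Xh_mul_Xword {NS T X} HX k vs _ _.

(** * The duality for words and polynomials *)

Section Divergence_of_words.
Variables (NS : NCProbSpace) (T : R) (X : R -> NS).
Hypothesis HX : is_centered_semicircular NS T X.

Notation W := (Xword NS X).
Notation valid_word := (Forall (valid_step T)).

Definition word_contraction_l (w1 : list step) (h : step) : NS :=
  Asum NS (map (fun '(a, g, b) => scal NS (Cmul (ipH NS X g h) (phi NS (W b))) (W a)) (splits w1)).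
Definition word_contraction_r (w2 : list step) (h : step) : NS :=
  Asum NS (map (fun '(a, g, b) => scal NS (Cmul (ipH NS X g h) (phi NS (W a))) (W b)) (splits w2)).

(* [P1 X(h) P2 - (L1 P2 + P1 R2)]: the divergence of [(P1 (x) P2) h] once [L1] and [R2]
   are the contractions of [h] against the derivatives of [P1] and [P2]. *)
Definition divergence_term (P1 L1 P2 R2 : NS) (h : step) : NS :=
  Asub NS (mul NS P1 (mul NS (Xh NS X h) P2)) (add NS (mul NS L1 P2) (mul NS P1 R2)).

(* The pairing [(phi x phi) <D W(w); (P1 (x) P2)^* h>]. *)
Definition derivative_pairing (w : list step) (h : step) (P1 P2 : NS) : C :=
  Csum (map (fun '(a, g, b) => Cmul (ipH NS X g h)
    (Cmul (phi NS (mul NS (W a) (star NS P1))) (phi NS (mul NS (W b) (star NS P2))))) (splits w)).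

Lemma Cconj_phi_Xword v : valid_word v -> Cconj (phi NS (W v)) = phi NS (W (rev v)).
Proof. intros Hv. rewrite <- phi_star, (star_Xword HX); auto. Qed.

Lemma phi_Xword_cycle v1 v2 v3 :
  phi NS (mul NS (W v1) (mul NS (W v2) (W v3))) = phi NS (W (v3 ++ v1 ++ v2)).
Proof. rewrite !Xword_app, mul_assoc, phi_trace; auto. Qed.

Lemma phi_Xword_mul_star_sandwich w w1 w2 h :
  valid_word w -> valid_word w1 -> valid_word w2 -> valid_step T h ->
  phi NS (mul NS (W w) (star NS (mul NS (W w1) (mul NS (Xh NS X h) (W w2))))) =
  Csum (map (fun '(a, g, b) => Cmul (ipH NS X h g) (Cmul (phi NS (W a)) (phi NS (W b))))
    (splits (rev w1 ++ w ++ rev w2))).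
Proof.
  intros Vw Vw1 Vw2 Vh. rewrite <- (phi_Xh_mul_Xword HX); auto.
  - rewrite !star_mul, (star_Xh HX), !(star_Xword HX), !Xword_app by auto.
    rewrite <- !mul_assoc, (mul_assoc NS (W w)), phi_trace, <- !mul_assoc. auto.
  - apply Forall_app; split; [apply Forall_rev; auto|].
    apply Forall_app; split; [auto | apply Forall_rev; auto].
Qed.

Lemma phi_Xword_mul_star_contraction_l w w1 w2 h :
  valid_word w1 -> valid_word w2 -> valid_step T h ->
  phi NS (mul NS (W w) (star NS (mul NS (word_contraction_l w1 h) (W w2)))) =
  Csum (map (fun '(a, g, b) => Cmul (ipH NS X h g)
    (Cmul (phi NS (W (rev b))) (phi NS (W (rev a ++ w ++ rev w2))))) (splits w1)).
Proof.
  intros Vw1 Vw2 Vh. unfold word_contraction_l.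
  rewrite star_mul, (star_Xword HX), star_Asum, map_map, mul_Asum_r, mul_Asum_r, phi_Asum, !map_map
    by auto.
  apply Csum_map_ext. intros [[a g] b] Hin.
  destruct (in_splits_Forall _ _ _ _ _ Vw1 Hin) as [Va [Vg Vb]].
  rewrite star_scal, mul_scal_r, mul_scal_r, phi_scal, Cconj_mul, (Cconj_ipH HX), ipH_comm,
    Cconj_phi_Xword, (star_Xword HX), phi_Xword_cycle by auto.
  ring.
Qed.

Lemma phi_Xword_mul_star_contraction_r w w1 w2 h :
  valid_word w1 -> valid_word w2 -> valid_step T h ->
  phi NS (mul NS (W w) (star NS (mul NS (W w1) (word_contraction_r w2 h)))) =
  Csum (map (fun '(a, g, b) => Cmul (ipH NS X h g)
    (Cmul (phi NS (W (rev w1 ++ w ++ rev b))) (phi NS (W (rev a))))) (splits w2)).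
Proof.
  intros Vw1 Vw2 Vh. unfold word_contraction_r.
  rewrite star_mul, (star_Xword HX), star_Asum, map_map, mul_Asum_l, mul_Asum_r, phi_Asum, !map_map
    by auto.
  apply Csum_map_ext. intros [[a g] b] Hin.
  destruct (in_splits_Forall _ _ _ _ _ Vw2 Hin) as [Va [Vg Vb]].
  rewrite star_scal, mul_scal_l, mul_scal_r, phi_scal, Cconj_mul, (Cconj_ipH HX), ipH_comm,
    Cconj_phi_Xword, (star_Xword HX), phi_Xword_cycle by auto.
  ring.
Qed.

(* The pairings of [X(h)] with a factor of [w1] or [w2] are exactly cancelled by the
   contraction terms; the pairings with a factor of [w] remain. *)
Lemma phi_Xword_mul_star_divergence_term w w1 w2 h :
  valid_word w -> valid_word w1 -> valid_word w2 -> valid_step T h ->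
  phi NS (mul NS (W w) (star NS (divergence_term (W w1) (word_contraction_l w1 h)
                                                 (W w2) (word_contraction_r w2 h) h))) =
  derivative_pairing w h (W w1) (W w2).
Proof.
  intros Vw Vw1 Vw2 Vh. unfold divergence_term.
  rewrite Asub_scal, star_add, star_scal, mul_add_r, mul_scal_r, phi_add, phi_scal,
    Cconj_opp, Cconj_C1, star_add, mul_add_r, phi_add.
  rewrite phi_Xword_mul_star_sandwich, phi_Xword_mul_star_contraction_l,
    phi_Xword_mul_star_contraction_r by auto.
  rewrite !splits_app, splits_rev, !map_app, !Csum_app, !map_rev, !Csum_rev, !map_map.
  rewrite (splits_rev w2), !map_rev, !Csum_rev, !map_map.
  match goal with |- Cadd (Cadd ?S1 (Cadd ?S2 ?S3)) (Cmul _ (Cadd ?S1' ?S3')) = _ =>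
    replace S1 with S1'; [replace S3 with S3'; [transitivity S2; [ring|]|]|] end.
  - apply Csum_map_ext. intros [[a g] b] Hin.
    destruct (in_splits_Forall _ _ _ _ _ Vw Hin) as [Va [Vg Vb]].
    rewrite ipH_comm, !(star_Xword HX), !Xword_app, (phi_trace NS (W a)) by auto. auto.
  - apply Csum_map_ext. intros [[a g] b] _. auto.
  - apply Csum_map_ext. intros [[a g] b] _. auto.
Qed.

End Divergence_of_words.

Ltac expand_ops :=
  repeat rewrite ?Asub_scal, ?star_add, ?star_scal, ?mul_add_l, ?mul_add_r, ?mul_scal_l,
    ?mul_scal_r, ?phi_add, ?phi_scal, ?star_zero, ?mul_zero_l, ?mul_zero_r, ?phi_zero,
    ?scal_zero, ?add_zero, ?add_0_l.

Section Conjugate_additive_forms.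
Variable NS : NCProbSpace.

Definition conj_additive (F : NS -> NS -> C) : Prop :=
  forall c a a' l l', F (add NS (scal NS c a) a') (add NS (scal NS c l) l') =
                      Cadd (Cmul (Cconj c) (F a l)) (F a' l').

Lemma conj_additive_zero F : conj_additive F -> F (zero NS) (zero NS) = C0.
Proof.
  intros H. specialize (H C1 (zero NS) (zero NS) (zero NS) (zero NS)).
  rewrite scal_one, add_zero, Cconj_C1 in H.
  replace C0 with (Cadd (Cadd (Cmul C1 (F (zero NS) (zero NS))) (F (zero NS) (zero NS)))
                        (Copp (F (zero NS) (zero NS)))) by (rewrite <- H; ring).
  ring.
Qed.

Definition combo {A} (f : A -> NS) (p : list (C * A)) : NS :=
  Asum NS (map (fun x => let '(c, w) := x in scal NS c (f w)) p).

Lemma conj_additive_combo_agree {A} (F G : NS -> NS -> C) (f g : A -> NS) p :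
  conj_additive F -> conj_additive G ->
  (forall c w, In (c, w) p -> F (f w) (g w) = G (f w) (g w)) ->
  F (combo f p) (combo g p) = G (combo f p) (combo g p).
Proof.
  intros HF HG; induction p as [|[c w] p IH]; intros H; unfold combo; simpl.
  - rewrite !conj_additive_zero; auto.
  - rewrite HF, HG, (H c w) by auto with datatypes. fold (combo f p) (combo g p).
    rewrite IH; [|intros c0 w0 Hin; apply (H c0 w0)]; auto with datatypes.
Qed.

End Conjugate_additive_forms.

Section Divergence_of_polynomials.
Variables (NS : NCProbSpace) (T : R) (X : R -> NS).
Hypothesis HX : is_centered_semicircular NS T X.

Notation W := (Xword NS X).

Lemma conj_additive_divergence_term_l w h P2 R2 :
  conj_additive NS (fun P1 L1 =>
    phi NS (mul NS (W w) (star NS (divergence_term NS X P1 L1 P2 R2 h)))).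
Proof. intros c a a' l l'. unfold divergence_term. expand_ops. ring. Qed.

Lemma conj_additive_divergence_term_r w h P1 L1 :
  conj_additive NS (fun P2 R2 =>
    phi NS (mul NS (W w) (star NS (divergence_term NS X P1 L1 P2 R2 h)))).
Proof. intros c a a' l l'. unfold divergence_term. expand_ops. ring. Qed.

Lemma conj_additive_derivative_pairing_l w h P2 :
  conj_additive NS (fun P1 _ => derivative_pairing NS X w h P1 P2).
Proof.
  intros c a a' l l'. unfold derivative_pairing.
  rewrite <- Csum_map_mul_l, <- Csum_map_add. apply Csum_map_ext. intros [[u g] v] _.
  expand_ops. ring.
Qed.

Lemma conj_additive_derivative_pairing_r w h P1 :
  conj_additive NS (fun P2 _ => derivative_pairing NS X w h P1 P2).
Proof.
  intros c a a' l l'. unfold derivative_pairing.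
  rewrite <- Csum_map_mul_l, <- Csum_map_add. apply Csum_map_ext. intros [[u g] v] _.
  expand_ops. ring.
Qed.

Lemma phi_Xword_mul_star_divergence_term_combo w h p1 p2 :
  Forall (valid_step T) w -> valid_step T h -> valid_poly T p1 -> valid_poly T p2 ->
  phi NS (mul NS (W w) (star NS (divergence_term NS X
      (combo NS W p1) (combo NS (fun w1 => word_contraction_l NS X w1 h) p1)
      (combo NS W p2) (combo NS (fun w2 => word_contraction_r NS X w2 h) p2) h))) =
  derivative_pairing NS X w h (combo NS W p1) (combo NS W p2).
Proof.
  intros Vw Vh V1 V2. unfold valid_poly in V1, V2. rewrite Forall_forall in V1, V2.
  set (Q2 := combo NS W p2). set (R2 := combo NS (fun w2 => word_contraction_r NS X w2 h) p2).
  apply (conj_additive_combo_agree NS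
    (fun P1 L1 => phi NS (mul NS (W w) (star NS (divergence_term NS X P1 L1 Q2 R2 h))))
    (fun P1 _ => derivative_pairing NS X w h P1 Q2));
    [apply conj_additive_divergence_term_l | apply conj_additive_derivative_pairing_l|].
  intros c1 w1 Hin1. subst Q2 R2.
  apply (conj_additive_combo_agree NS
    (fun P2 R2 => phi NS (mul NS (W w) (star NS (divergence_term NS X (W w1)
                    (word_contraction_l NS X w1 h) P2 R2 h))))
    (fun P2 _ => derivative_pairing NS X w h (W w1) P2));
    [apply conj_additive_divergence_term_r | apply conj_additive_derivative_pairing_r|].
  intros c2 w2 Hin2.
  apply (phi_Xword_mul_star_divergence_term NS T X HX); auto;
    [apply (V1 _ Hin1) | apply (V2 _ Hin2)].
Qed.

End Divergence_of_polynomials.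

(** * Expansion of both sides *)

Section Tensors.
Variables (NS : NCProbSpace) (X : R -> NS).

Notation W := (Xword NS X).

Lemma phiphi_app l1 l2 : phiphi NS (l1 ++ l2) = Cadd (phiphi NS l1) (phiphi NS l2).
Proof. unfold phiphi. rewrite map_app, Csum_app; auto. Qed.

Lemma phiphi_T2scal c t : phiphi NS (T2scal NS c t) = Cmul c (phiphi NS t).
Proof.
  unfold phiphi, T2scal. rewrite map_map, <- Csum_map_mul_l. f_equal. apply map_ext.
  intros [a b]. rewrite phi_scal. ring.
Qed.

Lemma phiphi_flat_map {A} (f : A -> T2 NS) l :
  phiphi NS (flat_map f l) = Csum (map (fun x => phiphi NS (f x)) l).
Proof. induction l; simpl; auto. rewrite phiphi_app, IHl; auto. Qed.

Lemma phiphi_pairSemi E F : phiphi NS (pairSemi NS X E F) =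
  Csum (map (fun '(x, h) => Csum (map (fun '(y, k) =>
    Cmul (ipH NS X h k) (phiphi NS (T2mul NS x y))) F)) E).
Proof.
  unfold pairSemi. rewrite phiphi_flat_map. f_equal. apply map_ext. intros [x h].
  rewrite phiphi_flat_map. f_equal. apply map_ext. intros [y k]. apply phiphi_T2scal.
Qed.

Lemma phiphi_T2mul x y : phiphi NS (T2mul NS x y) =
  Csum (map (fun '(a, b) => Csum (map (fun '(c, d) =>
    Cmul (phi NS (mul NS a c)) (phi NS (mul NS b d))) y)) x).
Proof.
  unfold T2mul. rewrite phiphi_flat_map. f_equal. apply map_ext. intros [a b].
  unfold phiphi. rewrite map_map. f_equal. apply map_ext. intros [c d]. auto.
Qed.

Lemma phi_Asum_mul_star_Asum {A B} (f : A -> NS) (g : B -> NS) l1 l2 :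
  phi NS (mul NS (Asum NS (map f l1)) (star NS (Asum NS (map g l2)))) =
  Csum (map (fun x => Csum (map (fun y => phi NS (mul NS (f x) (star NS (g y)))) l2)) l1).
Proof.
  rewrite star_Asum, mul_Asum_l, phi_Asum, !map_map. f_equal. apply map_ext. intros x.
  rewrite mul_Asum_r, phi_Asum, !map_map. auto.
Qed.

Lemma DX_word_splits c w :
  DX_word NS X c w = map (fun '(a, g, b) => ([(scal NS c (W a), W b)], g)) (splits w).
Proof. unfold DX_word. rewrite <- (splits_firstn_skipn w []), map_map. auto. Qed.

(* [(Id x phi)] and [(phi x Id)] applied to [<E, h>] for [E] in [E([0,T]; A (x) A)]. *)
Definition contraction_l (E : list (T2 NS * step)) (h : step) : NS :=
  Asum NS (flat_map (fun '(t, g) =>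
    map (fun '(a, b) => scal NS (Cmul (ipH NS X g h) (phi NS b)) a) t) E).
Definition contraction_r (E : list (T2 NS * step)) (h : step) : NS :=
  Asum NS (flat_map (fun '(t, g) =>
    map (fun '(a, b) => scal NS (Cmul (ipH NS X g h) (phi NS a)) b) t) E).

Lemma contraction_l_app E1 E2 h :
  contraction_l (E1 ++ E2) h = add NS (contraction_l E1 h) (contraction_l E2 h).
Proof. unfold contraction_l. rewrite flat_map_app, Asum_app; auto. Qed.

Lemma contraction_r_app E1 E2 h :
  contraction_r (E1 ++ E2) h = add NS (contraction_r E1 h) (contraction_r E2 h).
Proof. unfold contraction_r. rewrite flat_map_app, Asum_app; auto. Qed.

Lemma contraction_l_DX p h :
  contraction_l (DX NS X p) h = combo NS (fun w => word_contraction_l NS X w h) p.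
Proof.
  induction p as [|[c w] p IH]; auto.
  change (DX NS X ((c, w) :: p)) with (DX_word NS X c w ++ DX NS X p).
  rewrite contraction_l_app, IH. unfold combo; simpl. f_equal.
  unfold contraction_l, word_contraction_l. rewrite DX_word_splits, Asum_flat_map, map_map.
  rewrite <- Asum_map_scal. f_equal. apply map_ext. intros [[a g] b]. simpl.
  rewrite add_zero, !scal_assoc. f_equal. ring.
Qed.

Lemma contraction_r_DX p h :
  contraction_r (DX NS X p) h = combo NS (fun w => word_contraction_r NS X w h) p.
Proof.
  induction p as [|[c w] p IH]; auto.
  change (DX NS X ((c, w) :: p)) with (DX_word NS X c w ++ DX NS X p).
  rewrite contraction_r_app, IH. unfold combo; simpl. f_equal.
  unfold contraction_r, word_contraction_r. rewrite DX_word_splits, Asum_flat_map, map_map.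
  rewrite <- Asum_map_scal. f_equal. apply map_ext. intros [[a g] b]. simpl.
  rewrite add_zero, !scal_assoc, phi_scal. f_equal. ring.
Qed.

Lemma IdphiId_app l1 l2 : IdphiId NS (l1 ++ l2) = add NS (IdphiId NS l1) (IdphiId NS l2).
Proof. unfold IdphiId. rewrite map_app, Asum_app; auto. Qed.

Lemma pairE3_app l1 l2 h : pairE3 NS X (l1 ++ l2) h = pairE3 NS X l1 h ++ pairE3 NS X l2 h.
Proof. apply flat_map_app. Qed.

Lemma IdphiId_pairE3_flat_map {A} (f : A -> list (T3 NS * step)) l h :
  IdphiId NS (pairE3 NS X (flat_map f l) h) =
  Asum NS (map (fun y => IdphiId NS (pairE3 NS X (f y) h)) l).
Proof.
  induction l as [|y l IH]; simpl; [unfold IdphiId; auto|].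
  rewrite pairE3_app, IdphiId_app, IH; auto.
Qed.

Lemma IdphiId_pairE3_tensor_r E P2 h :
  IdphiId NS (pairE3 NS X (map (fun z => let '(t, k) := z in
      (map (fun ab => let '(a, b) := ab in (a, b, P2)) t, k)) E) h) =
  mul NS (contraction_l E h) P2.
Proof.
  unfold contraction_l. induction E as [|[t k] E IH]; simpl; [rewrite mul_zero_l; auto|].
  unfold pairE3 in *. simpl. rewrite IdphiId_app, IH, Asum_app, mul_add_l. f_equal.
  unfold IdphiId, T3scal. rewrite mul_Asum_l, !map_map. f_equal. apply map_ext. intros [a b].
  rewrite !mul_scal_l, scal_assoc. f_equal. ring.
Qed.

Lemma IdphiId_pairE3_tensor_l E P1 h :
  IdphiId NS (pairE3 NS X (map (fun z => let '(t, k) := z in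
      (map (fun ab => let '(a, b) := ab in (P1, a, b)) t, k)) E) h) =
  mul NS P1 (contraction_r E h).
Proof.
  unfold contraction_r. induction E as [|[t k] E IH]; simpl; [rewrite mul_zero_r; auto|].
  unfold pairE3 in *. simpl. rewrite IdphiId_app, IH, Asum_app, mul_add_r. f_equal.
  unfold IdphiId, T3scal. rewrite mul_Asum_r, !map_map. f_equal. apply map_ext. intros [a b].
  rewrite mul_scal_l, mul_scal_r, scal_assoc. f_equal. ring.
Qed.

Lemma deltaX_divergence_terms U : deltaX NS X U =
  Asum NS (map (fun '(xx, h) => Asum NS (map (fun '(p1, p2) =>
    divergence_term NS X (evalP NS X p1) (combo NS (fun w => word_contraction_l NS X w h) p1)
                         (evalP NS X p2) (combo NS (fun w => word_contraction_r NS X w h) p2) h)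
    xx)) U).
Proof.
  unfold deltaX. f_equal. apply map_ext. intros [xx h].
  replace (sharp NS (evalPT2 NS X xx) (Xh NS X h)) with (Asum NS (map (fun '(p1, p2) =>
    mul NS (evalP NS X p1) (mul NS (Xh NS X h) (evalP NS X p2))) xx)).
  2:{ unfold sharp, evalPT2. rewrite map_map. f_equal. apply map_ext. intros [p1 p2]; auto. }
  unfold DX2. rewrite IdphiId_pairE3_flat_map, Asub_Asum.
  f_equal. apply map_ext. intros [p1 p2]. rewrite pairE3_app, IdphiId_app.
  rewrite IdphiId_pairE3_tensor_r, IdphiId_pairE3_tensor_l, contraction_l_DX, contraction_r_DX.
  reflexivity.
Qed.

Lemma phi_evalP_mul_star_deltaX Y U :
  phi NS (mul NS (evalP NS X Y) (star NS (deltaX NS X U))) =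
  Csum (map (fun '(c, w) => Csum (map (fun '(xx, h) => Csum (map (fun '(p1, p2) =>
    Cmul c (phi NS (mul NS (W w) (star NS (divergence_term NS X
      (evalP NS X p1) (combo NS (fun w1 => word_contraction_l NS X w1 h) p1)
      (evalP NS X p2) (combo NS (fun w2 => word_contraction_r NS X w2 h) p2) h)))))
    xx)) U)) Y).
Proof.
  rewrite deltaX_divergence_terms. unfold evalP at 1.
  rewrite phi_Asum_mul_star_Asum. apply Csum_map_ext. intros [c w] _.
  apply Csum_map_ext. intros [xx h] _.
  rewrite star_Asum, mul_Asum_r, phi_Asum, !map_map. apply Csum_map_ext. intros [p1 p2] _.
  rewrite mul_scal_l, phi_scal. reflexivity.
Qed.

Lemma phiphi_pairSemi_DX_EUstar Y U :
  phiphi NS (pairSemi NS X (DX NS X Y) (EUstar NS X U)) =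
  Csum (map (fun '(c, w) => Csum (map (fun '(xx, h) => Csum (map (fun '(p1, p2) =>
    Cmul c (derivative_pairing NS X w h (evalP NS X p1) (evalP NS X p2))) xx)) U)) Y).
Proof.
  rewrite phiphi_pairSemi. unfold DX at 1. rewrite Csum_map_flat_map.
  apply Csum_map_ext. intros [c w] _. rewrite DX_word_splits, map_map. unfold EUstar.
  rewrite (Csum_map_ext _ (fun x => Csum (map (fun y => (fun x y =>
    let '(a, g, b) := x in let '(xx, h) := y in
    Cmul (ipH NS X g h)
      (phiphi NS (T2mul NS [(scal NS c (W a), W b)] (T2star NS (evalPT2 NS X xx)))))
    x y) U)) (splits w)).
  2:{ intros [[a g] b] _. rewrite map_map. apply Csum_map_ext. intros [xx h] _. auto. }
  rewrite <- Csum_swap. apply Csum_map_ext. intros [xx h] _.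
  rewrite (Csum_map_ext _ (fun x => Csum (map (fun y => (fun x y =>
    let '(a, g, b) := x in let '(p1, p2) := y in
    Cmul c (Cmul (ipH NS X g h) (Cmul (phi NS (mul NS (W a) (star NS (evalP NS X p1))))
                                      (phi NS (mul NS (W b) (star NS (evalP NS X p2)))))))
    x y) xx)) (splits w)).
  2:{ intros [[a g] b] _. rewrite phiphi_T2mul. simpl. rewrite Cadd_C0_r, <- Csum_map_mul_l.
      unfold T2star, evalPT2. rewrite !map_map. apply Csum_map_ext. intros [p1 p2] _.
      rewrite mul_scal_l, phi_scal. ring. }
  rewrite <- Csum_swap. apply Csum_map_ext. intros [p1 p2] _.
  unfold derivative_pairing. rewrite <- Csum_map_mul_l.
  apply Csum_map_ext. intros [[a g] b] _. reflexivity.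
Qed.

End Tensors.

Theorem mainTheorem2 (NS : NCProbSpace) (T : R) (X : R -> NS)
  (HT : 0 < T) (HX : is_centered_semicircular NS T X)
  (Y : AXpoly) (HY : valid_poly T Y) (U : EU) (HU : valid_EU T U) :
  phi NS (mul NS (evalP NS X Y) (star NS (deltaX NS X U))) =
  phiphi NS (pairSemi NS X (DX NS X Y) (EUstar NS X U)).
Proof.
  rewrite phi_evalP_mul_star_deltaX, phiphi_pairSemi_DX_EUstar.
  apply Csum_map_ext. intros [c w] HinY. apply Csum_map_ext. intros [xx h] HinU.
  apply Csum_map_ext. intros [p1 p2] Hinxx. f_equal.
  unfold valid_poly in HY. unfold valid_EU in HU. rewrite Forall_forall in HY, HU.
  destruct (HU _ HinU) as [Vh Vxx]. rewrite Forall_forall in Vxx.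
  destruct (Vxx _ Hinxx) as [V1 V2].
  apply (phi_Xword_mul_star_divergence_term_combo NS T X HX); auto. apply (HY _ HinY).
Qed.
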